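(* The acute hat can be realized in $\mathbb{R}^3$ as an embedded polyhedral surface, with each face congruent to its prescribed triangle. In this realization the boundary $a_1a_2a_3$ is an equilateral triangle, and the surface lies within the right prism whose base is this equilateral triangle.
   Context: A hat is a triangulated closed disk with seven vertices $a_1,a_2,a_3$ (on the boundary), $p_1,p_2,p_3$ and $o$ (the center), both of the latter groups interior. Indices are taken mod 3. It has nine triangular faces: - the brim triangles $a_i a_{i+1} p_{i+2}$; - the band triangles $a_i p_{i+1} p_{i+2}$; - the crown triangles $o\, p_i p_{i+1}$. Its boundary is the cycle $a_1a_2a_3$. The acute hat is the hat whose faces have the following metric shapes, all acute isosceles triangles: - each brim triangle $a_i a_{i+1} p_{i+2}$ has apex angle $85^\circ$ at $p_{i+2}$ and base angles $47.5^\circ$ at $a_i,a_{i+1}$; - each band triangle $a_i p_{i+1}p_{i+2}$ has apex angle $10^\circ$ at $a_i$ and base angles $85^\circ$; - each crown triangle $o\,p_ip_{i+1}$ is congruent to the band triangles, with apex angle $10^\circ$ at $o$ and base angles $85^\circ$. *)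

From Stdlib Require Import Reals Lra List.
Import ListNotations.
Open Scope R_scope.

Record pt := Pt { px : R; py : R; pz : R }.

Definition vadd (u v : pt) : pt := Pt (px u + px v) (py u + py v) (pz u + pz v).
Definition vsub (u v : pt) : pt := Pt (px u - px v) (py u - py v) (pz u - pz v).
Definition vscale (c : R) (u : pt) : pt := Pt (c * px u) (c * py u) (c * pz u).
Definition vzero : pt := Pt 0 0 0.
Definition dot (u v : pt) : R := px u * px v + py u * py v + pz u * pz v.
Definition dist3 (u v : pt) : R := sqrt (dot (vsub u v) (vsub u v)).

Fixpoint lincomb (ws : list R) (l : list pt) : pt :=
  match ws, l with
  | w :: ws', x :: l' => vadd (vscale w x) (lincomb ws' l')
  | _, _ => vzero
  end.

Definition hull (l : list pt) (x : pt) : Prop :=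
  exists ws : list R,
    length ws = length l /\ Forall (fun w => 0 <= w) ws /\
    fold_right Rplus 0 ws = 1 /\ x = lincomb ws l.

Inductive hvert := Va1 | Va2 | Va3 | Vp1 | Vp2 | Vp3 | Vo.

Definition hvert_eqb (u v : hvert) : bool :=
  match u, v with
  | Va1, Va1 | Va2, Va2 | Va3, Va3 | Vp1, Vp1 | Vp2, Vp2 | Vp3, Vp3 | Vo, Vo => true
  | _, _ => false
  end.

(* Faces (indices mod 3):
   brim  a_i a_{i+1} p_{i+2};  band a_i p_{i+1} p_{i+2};  crown o p_i p_{i+1} *)
Definition brim_faces : list (list hvert) := [[Va1;Va2;Vp3]; [Va2;Va3;Vp1]; [Va3;Va1;Vp2]].
Definition band_faces : list (list hvert) := [[Va1;Vp2;Vp3]; [Va2;Vp3;Vp1]; [Va3;Vp1;Vp2]].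
Definition crown_faces : list (list hvert) := [[Vo;Vp1;Vp2]; [Vo;Vp2;Vp3]; [Vo;Vp3;Vp1]].
Definition hat_faces : list (list hvert) := brim_faces ++ band_faces ++ crown_faces.

Definition common (F G : list hvert) : list hvert :=
  filter (fun v => existsb (hvert_eqb v) G) F.

(* A realization f : hvert -> R^3 is an embedding of the triangulated disk:
   vertices go to distinct points, and any two (closed, geometric) faces meet
   exactly in the convex hull of their common vertices (i.e. in the common
   edge / common vertex / not at all).  Together with non-degeneracy of the
   faces (implied by the prescribed side lengths) this is the standard notion
   of an embedded (geometric) simplicial complex. *)
Definition embedded (f : hvert -> pt) : Prop :=
  (forall u v, f u = f v -> u = v) /\
  forall F G, In F hat_faces -> In G hat_faces ->
    forall x, hull (map f F) x -> hull (map f G) x -> hull (map f (common F G)) x.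

Definition on_surface (f : hvert -> pt) (x : pt) : Prop :=
  exists F, In F hat_faces /\ hull (map f F) x.

(* Triangle (apex, b1, b2) congruent to the isosceles triangle with legs L
   and apex angle theta (in degrees): legs L, base 2 L sin(theta/2). *)
Definition deg (theta : R) : R := theta * PI / 180.
Definition isosceles (apex b1 b2 : pt) (L theta : R) : Prop :=
  dist3 apex b1 = L /\ dist3 apex b2 = L /\ dist3 b1 b2 = 2 * L * sin (deg theta / 2).

(* The acute hat metric, at common scale L:
   brim a_i a_{i+1} p_{i+2}: apex 85 deg at p_{i+2}, base angles 47.5 deg;
   band a_i p_{i+1} p_{i+2}: apex 10 deg at a_i, base angles 85 deg;
   crown o p_i p_{i+1}: apex 10 deg at o (congruent to the band triangles). *)
Definition acute_hat_metric (f : hvert -> pt) (L : R) : Prop :=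
  isosceles (f Vp3) (f Va1) (f Va2) L 85 /\
  isosceles (f Vp1) (f Va2) (f Va3) L 85 /\
  isosceles (f Vp2) (f Va3) (f Va1) L 85 /\
  isosceles (f Va1) (f Vp2) (f Vp3) L 10 /\
  isosceles (f Va2) (f Vp3) (f Vp1) L 10 /\
  isosceles (f Va3) (f Vp1) (f Vp2) L 10 /\
  isosceles (f Vo) (f Vp1) (f Vp2) L 10 /\
  isosceles (f Vo) (f Vp2) (f Vp3) L 10 /\
  isosceles (f Vo) (f Vp3) (f Vp1) L 10.

(* Right prism with base the triangle a1 a2 a3: points y + t n with y in the
   triangle, t >= 0, n a fixed nonzero normal vector of the triangle's plane. *)
Definition in_right_prism (a1 a2 a3 n x : pt) : Prop :=
  exists y t, hull [a1; a2; a3] y /\ 0 <= t /\ x = vadd y (vscale t n).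

From Stdlib Require Import Reals List Lra Psatz Machin.
Import ListNotations.
Open Scope R_scope.

(* The acute hat is realized with 3-fold rotational symmetry about the z-axis,
   all edge lengths being measured with legs of length 1: the boundary a_1a_2a_3
   is an equilateral triangle of circumradius R in the plane z = 0, the inner
   vertices p_1p_2p_3 form a smaller equilateral triangle of circumradius rho,
   rotated by 180 degrees, in the plane z = h, and o sits on the axis at height
   h + g.  Choosing R, rho from the chords 2 sin 42.5 and 2 sin 5 and h, g by
   Pythagoras makes every face congruent to its prescribed triangle. *)

Definition vopp (u : pt) : pt := Pt (- px u) (- py u) (- pz u).

Lemma dot_vopp n u : dot (vopp n) u = - dot n u.
Proof. unfold dot, vopp; simpl; ring. Qed.

Lemma dot_lincomb_cons n w ws P l :
  dot n (lincomb (w :: ws) (P :: l)) = w * dot n P + dot n (lincomb ws l).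
Proof. unfold dot; simpl; ring. Qed.

Lemma lincomb_dot_le n c0 ws l :
  length ws = length l -> Forall (fun w => 0 <= w) ws ->
  (forall P, In P l -> dot n P <= c0) ->
  dot n (lincomb ws l) <= c0 * fold_right Rplus 0 ws.
Proof.
  revert ws; induction l as [|P l IH]; intros [|w ws] Hlen Hpos Hle;
    try discriminate.
  - unfold dot; simpl; lra.
  - inversion Hpos as [|? ? Hw Hws]; subst.
    rewrite dot_lincomb_cons; simpl.
    assert (HP : dot n P <= c0) by (apply Hle; left; reflexivity).
    assert (Hrest : dot n (lincomb ws l) <= c0 * fold_right Rplus 0 ws)
      by (apply IH; auto; intros Q HQ; apply Hle; right; exact HQ).
    nra.
Qed.

Lemma lincomb_dot_ge n c0 ws l :
  length ws = length l -> Forall (fun w => 0 <= w) ws ->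
  (forall P, In P l -> c0 <= dot n P) ->
  c0 * fold_right Rplus 0 ws <= dot n (lincomb ws l).
Proof.
  intros Hlen Hpos Hge.
  assert (H : dot (vopp n) (lincomb ws l) <= - c0 * fold_right Rplus 0 ws).
  { apply lincomb_dot_le; auto.
    intros P HP; rewrite dot_vopp; specialize (Hge P HP); lra. }
  rewrite dot_vopp in H; lra.
Qed.

Lemma hull_dot_le n c0 l x :
  hull l x -> (forall P, In P l -> dot n P <= c0) -> dot n x <= c0.
Proof.
  intros [ws [Hlen [Hpos [Hsum ->]]]] Hle.
  rewrite <- (Rmult_1_r c0), <- Hsum; apply lincomb_dot_le; assumption.
Qed.

Lemma hull_dot_ge n c0 l x :
  hull l x -> (forall P, In P l -> c0 <= dot n P) -> c0 <= dot n x.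
Proof.
  intros Hx Hge.
  assert (H : dot (vopp n) x <= - c0).
  { apply (hull_dot_le _ _ _ _ Hx).
    intros P HP; rewrite dot_vopp; specialize (Hge P HP); lra. }
  rewrite dot_vopp in H; lra.
Qed.

Lemma hull_map_dot_ge {A : Type} (f : A -> pt) n c0 l x :
  hull (map f l) x -> (forall v, c0 <= dot n (f v)) -> c0 <= dot n x.
Proof.
  intros Hx Hge; apply (hull_dot_ge _ _ _ _ Hx).
  intros P HP; apply in_map_iff in HP as [v [<- _]]; apply Hge.
Qed.

(* Supporting hyperplanes: if [dot n] is at least c0 on the vertices and at
   most c0 on the combination, every vertex where it exceeds c0 carries weight
   zero, so the combination only uses the vertices selected by p. *)
Lemma lincomb_support {A : Type} (f : A -> pt) (p : A -> bool) n c0 l ws :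
  length ws = length l -> Forall (fun w => 0 <= w) ws ->
  (forall v, In v l -> c0 <= dot n (f v)) ->
  (forall v, In v l -> p v = false -> c0 < dot n (f v)) ->
  dot n (lincomb ws (map f l)) <= c0 * fold_right Rplus 0 ws ->
  exists ws', length ws' = length (filter p l) /\ Forall (fun w => 0 <= w) ws' /\
    fold_right Rplus 0 ws' = fold_right Rplus 0 ws /\
    lincomb ws' (map f (filter p l)) = lincomb ws (map f l).
Proof.
  revert ws; induction l as [|v l IH]; intros [|w ws] Hlen Hpos Hge Hgt Hle;
    try discriminate.
  - exists []; split; [reflexivity | split; [constructor | split; reflexivity]].
  - inversion Hpos as [|? ? Hw Hws]; subst.
    cbn [map] in Hle; rewrite dot_lincomb_cons in Hle; cbn [fold_right] in Hle.
    assert (Hv : c0 <= dot n (f v)) by (apply Hge; left; reflexivity).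
    assert (Hrest : c0 * fold_right Rplus 0 ws <= dot n (lincomb ws (map f l))).
    { apply lincomb_dot_ge; auto; [rewrite length_map; auto|].
      intros P HP; apply in_map_iff in HP as [u [<- Hu]]; apply Hge; right; exact Hu. }
    destruct (IH ws) as [ws' [Hlen' [Hpos' [Hsum' Hcomb']]]]; auto.
    { intros u Hu; apply Hge; right; exact Hu. }
    { intros u Hu; apply Hgt; right; exact Hu. }
    { nra. }
    cbn [filter]; destruct (p v) eqn:Hp.
    + exists (w :: ws'); split; [|split; [|split]]; cbn.
      * rewrite Hlen'; reflexivity.
      * constructor; assumption.
      * rewrite Hsum'; reflexivity.
      * cbn in Hcomb'; rewrite Hcomb'; reflexivity.
    + assert (Hw0 : w = 0).
      { assert (Hvgt : c0 < dot n (f v)) by (apply Hgt; [left|]; auto). nra. }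
      subst w; exists ws'; split; [|split; [|split]]; auto.
      * cbn; rewrite Hsum'; ring.
      * rewrite Hcomb'; cbn; destruct (lincomb ws (map f l)).
        unfold vadd, vscale; cbn; f_equal; ring.
Qed.

Lemma hull_support {A : Type} (f : A -> pt) (p : A -> bool) n c0 l x :
  hull (map f l) x ->
  (forall v, In v l -> c0 <= dot n (f v)) ->
  (forall v, In v l -> p v = false -> c0 < dot n (f v)) ->
  dot n x <= c0 -> hull (map f (filter p l)) x.
Proof.
  intros [ws [Hlen [Hpos [Hsum ->]]]] Hge Hgt Hle.
  rewrite length_map in Hlen.
  destruct (lincomb_support f p n c0 l ws) as [ws' [Hlen' [Hpos' [Hsum' Hcomb']]]];
    auto.
  { rewrite Hsum; lra. }
  exists ws'; split; [|split; [|split]].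
  - rewrite length_map; exact Hlen'.
  - exact Hpos'.
  - rewrite Hsum'; exact Hsum.
  - symmetry; exact Hcomb'.
Qed.

Definition in_face (v : hvert) (G : list hvert) : bool := existsb (hvert_eqb v) G.

Lemma hvert_eqbP u v : hvert_eqb u v = true <-> u = v.
Proof. destruct u, v; cbn; split; congruence. Qed.

Lemma in_faceP v G : in_face v G = true <-> In v G.
Proof.
  unfold in_face; rewrite existsb_exists; split.
  - intros [w [Hw E]]; apply hvert_eqbP in E; subst; exact Hw.
  - intros Hv; exists v; split; [exact Hv | apply hvert_eqbP; reflexivity].
Qed.

Lemma not_in_face v G : in_face v G = false -> ~ In v G.
Proof. intros E H; apply in_faceP in H; congruence. Qed.

Definition separated (f : hvert -> pt) (n : pt) (c0 : R) (F G : list hvert) : Prop :=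
  (forall v, In v F -> In v G -> dot n (f v) = c0) /\
  (forall v, In v F -> ~ In v G -> c0 < dot n (f v)) /\
  (forall v, In v G -> ~ In v F -> dot n (f v) < c0).

(* Separated faces meet only in the hull of their common vertices: a common
   point is below the plane (it lies in G), hence on it, hence in the face of F
   cut out by the plane. *)
Lemma separated_faces_meet f n c0 F G x :
  separated f n c0 F G -> hull (map f F) x -> hull (map f G) x ->
  hull (map f (common F G)) x.
Proof.
  intros [Hon [Habove Hbelow]] HF HG.
  assert (Hx : dot n x <= c0).
  { apply (hull_dot_le _ _ _ _ HG); intros P HP.
    apply in_map_iff in HP as [v [<- Hv]].
    destruct (in_face v F) eqn:HvF.
    - apply Req_le, Hon; [apply in_faceP|]; assumption.
    - apply Rlt_le, Hbelow; [|apply not_in_face]; assumption. }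
  apply (hull_support f (fun v => in_face v G) n c0 F x HF); auto.
  - intros v Hv; destruct (in_face v G) eqn:HvG.
    + apply Req_le; symmetry; apply Hon; [|apply in_faceP]; assumption.
    + apply Rlt_le, Habove; [|apply not_in_face]; assumption.
  - intros v Hv HvG; apply Habove; [|apply not_in_face]; assumption.
Qed.

Lemma separated_swap f n c0 F G :
  separated f n c0 F G -> separated f (vopp n) (- c0) G F.
Proof.
  intros [Hon [Habove Hbelow]]; split; [|split]; intros v Hv Hm; rewrite dot_vopp.
  - rewrite (Hon v Hm Hv); reflexivity.
  - specialize (Hbelow v Hv Hm); lra.
  - specialize (Habove v Hv Hm); lra.
Qed.

Definition rot_vertex (v : hvert) : hvert :=
  match v with
  | Va1 => Va2 | Va2 => Va3 | Va3 => Va1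
  | Vp1 => Vp2 | Vp2 => Vp3 | Vp3 => Vp1
  | Vo => Vo
  end.

Lemma rot_vertex_inj u v : rot_vertex u = rot_vertex v -> u = v.
Proof. destruct u, v; cbn; congruence. Qed.

Lemma rot_vertex_cube v : rot_vertex (rot_vertex (rot_vertex v)) = v.
Proof. destruct v; reflexivity. Qed.

Lemma in_map_rot v G : In (rot_vertex v) (map rot_vertex G) <-> In v G.
Proof.
  rewrite in_map_iff; split.
  - intros [u [E Hu]]; apply rot_vertex_inj in E; subst; exact Hu.
  - intros Hv; exists v; split; [reflexivity | exact Hv].
Qed.

Section Rotation.
Variable s : R.
Hypothesis s_sq : s * s = 3 / 4.

(* Rotation by 120 degrees about the z-axis (s stands for sqrt 3 / 2). *)
Definition rot (u : pt) : pt :=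
  Pt (- px u / 2 - s * py u) (s * px u - py u / 2) (pz u).

Lemma dot_rot n u : dot (rot n) (rot u) = dot n u.
Proof.
  assert (E : dot (rot n) (rot u) - dot n u
              = (s * s - 3 / 4) * (px n * px u + py n * py u))
    by (unfold dot, rot; cbn [px py pz]; field).
  rewrite s_sq in E; lra.
Qed.

Lemma separated_rot f n c0 F G :
  (forall v, f (rot_vertex v) = rot (f v)) ->
  separated f n c0 F G ->
  separated f (rot n) c0 (map rot_vertex F) (map rot_vertex G).
Proof.
  intros Hf [Hon [Habove Hbelow]]; split; [|split]; intros w Hw Hm;
    apply in_map_iff in Hw as [v [<- Hv]]; rewrite Hf, dot_rot;
    rewrite in_map_rot in Hm; auto.
Qed.
End Rotation.

(* Boundary triangle of circumradius r and side c at height 0, inner triangle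
   of circumradius t and side d at height h, apex o at height h + g. *)
Definition hat_pt (r t c d h g : R) (v : hvert) : pt :=
  match v with
  | Va1 => Pt r 0 0
  | Va2 => Pt (- (r / 2)) (c / 2) 0
  | Va3 => Pt (- (r / 2)) (- (c / 2)) 0
  | Vp1 => Pt (- t) 0 h
  | Vp2 => Pt (t / 2) (- (d / 2)) h
  | Vp3 => Pt (t / 2) (d / 2) h
  | Vo => Pt 0 0 (h + g)
  end.

Definition certified (f : hvert -> pt) (F G : list hvert) : Prop :=
  exists n c0, separated f n c0 F G.

Lemma common_self F : common F F = F.
Proof.
  unfold common.
  assert (H : forall l, incl l F -> filter (fun v => existsb (hvert_eqb v) F) l = l).
  { induction l as [|v l IH]; intros Hl; [reflexivity|]; cbn.
    replace (existsb (hvert_eqb v) F) with true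
      by (symmetry; apply in_faceP, Hl; left; reflexivity).
    rewrite IH; [reflexivity|]. intros w Hw; apply Hl; right; exact Hw. }
  apply H, incl_refl.
Qed.

Lemma embedded_of_separation f :
  (forall u v, f u = f v -> u = v) ->
  (forall F G, In F hat_faces -> In G hat_faces -> F = G \/ certified f F G) ->
  embedded f.
Proof.
  intros Hinj Hsep; split; [exact Hinj|].
  intros F G HF HG x HxF HxG.
  destruct (Hsep F G HF HG) as [<- | [n [c0 Hnc]]].
  - rewrite common_self; exact HxF.
  - exact (separated_faces_meet f n c0 F G x Hnc HxF HxG).
Qed.

Lemma certified_swap f F G : certified f F G -> certified f G F.
Proof. intros [n [c0 H]]; exists (vopp n), (- c0); apply separated_swap, H. Qed.

Lemma dist3_eq u v y :
  0 <= y -> dot (vsub u v) (vsub u v) = y * y -> dist3 u v = y.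
Proof. intros Hy E; unfold dist3; rewrite E; apply sqrt_square, Hy. Qed.

Section HatModel.
Variables r t c d h g s : R.
Hypotheses (r_bnd : 0.78007 <= r <= 0.78017) (t_bnd : 0.10063 <= t <= 0.10065)
  (c_bnd : 1.35114 <= c <= 1.35128) (d_bnd : 0.1743 <= d <= 0.17432)
  (h_bnd : 0.6779 <= h <= 0.6783) (g_bnd : 0.9949 <= g <= 0.9950).
Hypotheses (s_sq : s * s = 3 / 4) (c_def : c = 2 * s * r) (d_def : d = 2 * s * t).

Let f := hat_pt r t c d h g.

Lemma hat_pt_rot v : f (rot_vertex v) = rot s (f v).
Proof.
  assert (sc : s * c = 3 / 2 * r) by (rewrite c_def; nra).
  assert (sd : s * d = 3 / 2 * t) by (rewrite d_def; nra).
  destruct v; unfold f, rot; cbn; f_equal; lra.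
Qed.

Lemma certified_rot F G :
  certified f F G -> certified f (map rot_vertex F) (map rot_vertex G).
Proof.
  intros [n [c0 H]]; exists (rot s n), c0.
  apply separated_rot; [exact s_sq | exact hat_pt_rot | exact H].
Qed.

(* Rotating twice more brings a pair back, so a certificate for the pair
   rotated twice certifies the pair itself. *)
Lemma certified_unrot F G :
  certified f (map rot_vertex (map rot_vertex F)) (map rot_vertex (map rot_vertex G)) ->
  certified f F G.
Proof.
  intros H; apply certified_rot in H.
  rewrite !map_map, !(map_ext _ _ rot_vertex_cube), !map_id in H; exact H.
Qed.

Ltac certificate :=
  split; [|split]; intros v Hv Hm; simpl in Hv;
  repeat destruct Hv as [<-|Hv]; try contradiction;
  first [ solve [exfalso; apply Hm; simpl; auto]
        | solve [simpl in Hm; intuition discriminate]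
        | unfold f, dot; cbn; nra ].

(* One separating plane for each of the 12 orbits of pairs of distinct faces
   (brim B_i = a_i a_(i+1) p_(i+2), band N_i = a_i p_(i+1) p_(i+2),
   crown C_i = o p_i p_(i+1)): B1B2, N1N2, C1C2, B1N_j, B1C_j, N1C_j. *)
Lemma separating_planes :
  certified f [Va1;Va2;Vp3] [Va2;Va3;Vp1] /\
  certified f [Va1;Vp2;Vp3] [Va2;Vp3;Vp1] /\
  certified f [Vo;Vp1;Vp2] [Vo;Vp2;Vp3] /\
  certified f [Va1;Va2;Vp3] [Va1;Vp2;Vp3] /\
  certified f [Va1;Va2;Vp3] [Va2;Vp3;Vp1] /\
  certified f [Va1;Va2;Vp3] [Va3;Vp1;Vp2] /\
  certified f [Va1;Va2;Vp3] [Vo;Vp1;Vp2] /\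
  certified f [Va1;Va2;Vp3] [Vo;Vp2;Vp3] /\
  certified f [Va1;Va2;Vp3] [Vo;Vp3;Vp1] /\
  certified f [Va1;Vp2;Vp3] [Vo;Vp1;Vp2] /\
  certified f [Va1;Vp2;Vp3] [Vo;Vp2;Vp3] /\
  certified f [Va1;Vp2;Vp3] [Vo;Vp3;Vp1].
Proof.
  repeat split.
  - exists (Pt 5 4 1), (dot (Pt 5 4 1) (f Va2)); certificate.
  - exists (Pt 5 (-3) 0), (dot (Pt 5 (-3) 0) (f Vp3)); certificate.
  - exists (Pt (- d) (- t) 0), 0; certificate.
  - exists (Pt (d / 2) (r - t / 2) 0), (dot (Pt (d / 2) (r - t / 2) 0) (f Va1));
      certificate.
  - exists (Pt (c / 2 - d / 2) (t / 2 + r / 2) 0),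
      (dot (Pt (c / 2 - d / 2) (t / 2 + r / 2) 0) (f Va2)); certificate.
  - exists (Pt 3 5 0), 0.151; certificate.
  - exists (Pt 3 5 (-1)), (-0.527); certificate.
  - exists (Pt 1 5 (-1)), (dot (Pt 1 5 (-1)) (f Vp3)); certificate.
  - exists (Pt 6 6 (-1)), (dot (Pt 6 6 (-1)) (f Vp3)); certificate.
  - exists (Pt 5 3 (-1)), (dot (Pt 5 3 (-1)) (f Vp2)); certificate.
  - exists (Pt 0 0 (-1)), (- h); certificate.
  - exists (Pt 5 (-3) (-1)), (dot (Pt 5 (-3) (-1)) (f Vp3)); certificate.
Qed.

Ltac from_representative :=
  first [ assumption | apply certified_swap; assumption ].

Ltac from_orbit :=
  first [ from_representative
        | apply certified_unrot; cbn [map rot_vertex]; from_representative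
        | apply certified_unrot, certified_unrot; cbn [map rot_vertex];
          from_representative ].

(* Every pair of distinct faces is a rotated, possibly swapped, representative. *)
Lemma all_pairs_certified F G :
  In F hat_faces -> In G hat_faces -> F = G \/ certified f F G.
Proof.
  destruct separating_planes as (BB & NN & CC & BN1 & BN2 & BN3 & BC1 & BC2 & BC3 &
    NC1 & NC2 & NC3).
  intros HF HG; simpl in HF, HG.
  destruct HF as [<-|[<-|[<-|[<-|[<-|[<-|[<-|[<-|[<-|[]]]]]]]]]];
  destruct HG as [<-|[<-|[<-|[<-|[<-|[<-|[<-|[<-|[<-|[]]]]]]]]]];
  first [ left; reflexivity | right; from_orbit ].
Qed.

Lemma hat_pt_injective u v : f u = f v -> u = v.
Proof. destruct u, v; intro E; try reflexivity; injection E; intros; lra. Qed.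

Lemma hat_embedded : embedded f.
Proof.
  apply embedded_of_separation; [exact hat_pt_injective | exact all_pairs_certified].
Qed.

Lemma hat_metric :
  c = 2 * 1 * sin (deg 85 / 2) -> d = 2 * 1 * sin (deg 10 / 2) ->
  h * h = 1 - r * r + r * t - t * t -> g * g = 1 - t * t ->
  acute_hat_metric f 1.
Proof.
  intros c_chord d_chord h_sq g_sq.
  assert (cc : c * c = 3 * (r * r)) by (rewrite c_def; nra).
  assert (dd : d * d = 3 * (t * t)) by (rewrite d_def; nra).
  assert (cd : c * d = 3 * (r * t)) by (rewrite c_def, d_def; nra).
  unfold acute_hat_metric, isosceles; rewrite <- c_chord, <- d_chord.
  repeat split; apply dist3_eq; unfold f, dot, vsub; cbn; lra.
Qed.

(* A point whose three (scaled) barycentric coordinates with respect to the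
   boundary triangle and whose height are nonnegative lies in the prism. *)
Lemma hat_prism_of_barycentric x :
  - (r * c) <= dot (Pt (2 * c) 0 0) x ->
  - (r * c) <= dot (Pt (- c) (3 * r) 0) x ->
  - (r * c) <= dot (Pt (- c) (- (3 * r)) 0) x ->
  0 <= dot (Pt 0 0 1) x ->
  in_right_prism (f Va1) (f Va2) (f Va3) (Pt 0 0 1) x.
Proof.
  unfold dot; cbn; intros H1 H2 H3 Hz.
  assert (Hk : 0 < 3 * r * c) by nra.
  exists (Pt (px x) (py x) 0), (pz x); split; [|split; [lra|]].
  - exists [(r * c + 2 * c * px x) / (3 * r * c);
            (r * c - c * px x + 3 * r * py x) / (3 * r * c);
            (r * c - c * px x - 3 * r * py x) / (3 * r * c)].
    split; [reflexivity | split; [|split]].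
    + repeat (apply Forall_cons; [apply Rle_mult_inv_pos; lra|]); apply Forall_nil.
    + cbn; field; lra.
    + unfold f; cbn [lincomb hat_pt]; unfold vadd, vscale, vzero; cbn [px py pz].
      f_equal; field; lra.
  - destruct x; unfold vadd, vscale; cbn; f_equal; ring.
Qed.

(* The four affine conditions hold at all seven vertices, hence on every face. *)
Lemma hat_surface_in_prism x :
  on_surface f x -> in_right_prism (f Va1) (f Va2) (f Va3) (Pt 0 0 1) x.
Proof.
  intros [F [_ Hx]].
  apply hat_prism_of_barycentric; apply (hull_map_dot_ge f _ _ F x Hx);
    intros v; destruct v; unfold f, dot; cbn; nra.
Qed.
End HatModel.

Lemma PI_bounds : 3.1415 < PI < 3.1417.
Proof.
  destruct (PI_2_3_7_ineq 2) as [H1 H2].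
  unfold tg_alt, PI_2_3_7_tg, Ratan_seq in H1, H2; simpl in H1, H2; lra.
Qed.

Lemma sin_taylor_lower a : 0 <= a <= PI -> a - a^3/6 + a^5/120 - a^7/5040 <= sin a.
Proof.
  intros [H0 H1]; destruct (sin_bound a 1 H0 H1) as [H _].
  unfold sin_approx, sin_term in H; cbn [sum_f_R0 Nat.mul Nat.add] in H.
  rewrite !INR_IZR_INZ in H; cbn in H |- *; lra.
Qed.

Lemma sin_taylor_upper a : 0 <= a <= PI -> sin a <= a - a^3/6 + a^5/120.
Proof.
  intros [H0 H1]; destruct (sin_bound a 0 H0 H1) as [_ H].
  unfold sin_approx, sin_term in H; cbn [sum_f_R0 Nat.mul Nat.add] in H.
  rewrite !INR_IZR_INZ in H; cbn in H |- *; lra.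
Qed.

(* sin is increasing on [0, pi/2], so Taylor bounds at the endpoints of an
   enclosing interval bound sin a. *)
Lemma sin_enclosure a lo hi : 0 <= lo <= a -> a <= hi -> hi <= 1.5 ->
  lo - lo^3/6 + lo^5/120 - lo^7/5040 <= sin a <= hi - hi^3/6 + hi^5/120.
Proof.
  intros Hlo Hhi Hle; pose proof PI_bounds; split.
  - apply Rle_trans with (sin lo); [apply sin_taylor_lower; lra | apply sin_incr_1; lra].
  - apply Rle_trans with (sin hi); [apply sin_incr_1; lra | apply sin_taylor_upper; lra].
Qed.

Definition half_sqrt3 : R := sqrt 3 / 2.
Definition base_edge : R := 2 * sin (deg 85 / 2).
Definition top_edge : R := 2 * sin (deg 10 / 2).
Definition base_radius : R := base_edge / (2 * half_sqrt3).
Definition top_radius : R := top_edge / (2 * half_sqrt3).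
Definition band_height : R :=
  sqrt (1 - base_radius * base_radius + base_radius * top_radius - top_radius * top_radius).
Definition crown_height : R := sqrt (1 - top_radius * top_radius).

Lemma half_sqrt3_sq : half_sqrt3 * half_sqrt3 = 3 / 4.
Proof.
  unfold half_sqrt3.
  replace (sqrt 3 / 2 * (sqrt 3 / 2)) with (sqrt 3 * sqrt 3 / 4) by field.
  rewrite sqrt_sqrt; lra.
Qed.

Lemma half_sqrt3_bounds : 0.866025 <= half_sqrt3 <= 0.866026.
Proof.
  pose proof half_sqrt3_sq.
  assert (0 <= half_sqrt3) by (unfold half_sqrt3; pose proof (sqrt_pos 3); lra).
  nra.
Qed.

Lemma base_edge_bounds : 1.35114 <= base_edge <= 1.35128.
Proof.
  pose proof PI_bounds.
  assert (3.1415 * 85 / 360 <= deg 85 / 2 <= 3.1417 * 85 / 360) by (unfold deg; lra).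
  pose proof (sin_enclosure (deg 85 / 2) (3.1415 * 85 / 360) (3.1417 * 85 / 360)
    ltac:(lra) ltac:(lra) ltac:(lra)).
  unfold base_edge; cbn [pow] in *; lra.
Qed.

Lemma top_edge_bounds : 0.1743 <= top_edge <= 0.17432.
Proof.
  pose proof PI_bounds.
  assert (3.1415 * 10 / 360 <= deg 10 / 2 <= 3.1417 * 10 / 360) by (unfold deg; lra).
  pose proof (sin_enclosure (deg 10 / 2) (3.1415 * 10 / 360) (3.1417 * 10 / 360)
    ltac:(lra) ltac:(lra) ltac:(lra)).
  unfold top_edge; cbn [pow] in *; lra.
Qed.

Lemma base_edge_radius : base_edge = 2 * half_sqrt3 * base_radius.
Proof. pose proof half_sqrt3_bounds; unfold base_radius; field; lra. Qed.

Lemma top_edge_radius : top_edge = 2 * half_sqrt3 * top_radius.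
Proof. pose proof half_sqrt3_bounds; unfold top_radius; field; lra. Qed.

Lemma base_radius_bounds : 0.78007 <= base_radius <= 0.78017.
Proof.
  pose proof half_sqrt3_bounds; pose proof base_edge_bounds; pose proof base_edge_radius.
  nra.
Qed.

Lemma top_radius_bounds : 0.10063 <= top_radius <= 0.10065.
Proof.
  pose proof half_sqrt3_bounds; pose proof top_edge_bounds; pose proof top_edge_radius.
  nra.
Qed.

Lemma band_height_sq :
  band_height * band_height
  = 1 - base_radius * base_radius + base_radius * top_radius - top_radius * top_radius.
Proof.
  pose proof base_radius_bounds; pose proof top_radius_bounds.
  unfold band_height; apply sqrt_sqrt; nra.
Qed.

Lemma crown_height_sq : crown_height * crown_height = 1 - top_radius * top_radius.
Proof. pose proof top_radius_bounds; unfold crown_height; apply sqrt_sqrt; nra. Qed.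

Lemma band_height_bounds : 0.6779 <= band_height <= 0.6783.
Proof.
  pose proof base_radius_bounds; pose proof top_radius_bounds; pose proof band_height_sq.
  assert (0 <= band_height) by apply sqrt_pos.
  nra.
Qed.

Lemma crown_height_bounds : 0.9949 <= crown_height <= 0.9950.
Proof.
  pose proof top_radius_bounds; pose proof crown_height_sq.
  assert (0 <= crown_height) by apply sqrt_pos.
  nra.
Qed.

Definition acute_hat : hvert -> pt :=
  hat_pt base_radius top_radius base_edge top_edge band_height crown_height.

Theorem lemma5 :
  exists (f : hvert -> pt) (L : R),
    0 < L /\
    acute_hat_metric f L /\
    embedded f /\
    dist3 (f Va1) (f Va2) = dist3 (f Va2) (f Va3) /\
    dist3 (f Va2) (f Va3) = dist3 (f Va3) (f Va1) /\
    exists n : pt,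
      n <> vzero /\
      dot n (vsub (f Va2) (f Va1)) = 0 /\ dot n (vsub (f Va3) (f Va1)) = 0 /\
      forall x, on_surface f x -> in_right_prism (f Va1) (f Va2) (f Va3) n x.
Proof.
  pose proof base_radius_bounds; pose proof top_radius_bounds;
  pose proof base_edge_bounds; pose proof top_edge_bounds;
  pose proof band_height_bounds; pose proof crown_height_bounds.
  pose proof half_sqrt3_sq; pose proof base_edge_radius; pose proof top_edge_radius.
  assert (metric : acute_hat_metric acute_hat 1).
  { apply (hat_metric _ _ _ _ _ _ half_sqrt3); auto;
      [unfold base_edge; ring | unfold top_edge; ring
      | exact band_height_sq | exact crown_height_sq]. }
  exists acute_hat, 1; split; [lra|]; split; [exact metric|].
  split; [apply (hat_embedded _ _ _ _ _ _ half_sqrt3); auto|].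
  destruct metric as [[_ [_ a12]] [[_ [_ a23]] [[_ [_ a31]] _]]].
  split; [congruence|]; split; [congruence|].
  exists (Pt 0 0 1); split; [|split; [|split]].
  - intro E; injection E; lra.
  - unfold dot, vsub; cbn; ring.
  - unfold dot, vsub; cbn; ring.
  - apply (hat_surface_in_prism _ _ _ _ _ _ half_sqrt3); auto.
Qed.
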